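(* Let $\{F_\theta\}_{\theta\in(0,1)}$ be a stable family of interpolation functors, let $T:(X_0,X_1)\to(Y_0,Y_1)$ be a bounded linear operator between Banach couples, and let $I\subset(0,1)$ be an interval of invertibility of $T$ with respect to $\{F_\theta\}$. If $Y_0\cap Y_1$ is dense in $F_\alpha(\vec Y)\cap F_\beta(\vec Y)$ for all $\alpha,\beta\in(0,1)$, then for any $\theta_0,\theta_1\in I$ the inverse operators $T_{\theta_0}^{-1}$ and $T_{\theta_1}^{-1}$ agree on $F_{\theta_0}(\vec Y)\cap F_{\theta_1}(\vec Y)$.
   Context: An operator $T:\vec X\to\vec Y$ is a linear map $X_0+X_1\to Y_0+Y_1$ bounded $X_j\to Y_j$. An interpolation functor $F$ assigns to each Banach couple $\vec A$ a Banach space $F(\vec A)$ with $A_0\cap A_1\subset F(\vec A)\subset A_0+A_1$ continuously, such that every operator $\vec A\to\vec B$ maps $F(\vec A)$ boundedly into $F(\vec B)$. $T_\theta$ denotes the restriction $T:F_\theta(\vec X)\to F_\theta(\vec Y)$; $F_\alpha(\vec Y)\cap F_\beta(\vec Y)$ carries the norm $\max\{\|\cdot\|_{F_\alpha(\vec Y)},\|\cdot\|_{F_\beta(\vec Y)}\}$. A family $\{F_\theta\}_{\theta\in(0,1)}$ is stable if for all Banach couples $\vec A,\vec B$ and every operator $S:\vec A\to\vec B$ with $S_{\theta_*}:F_{\theta_*}(\vec A)\to F_{\theta_*}(\vec B)$ invertible for some $\theta_*\in(0,1)$, there is $\varepsilon>0$ such that for all $\theta\in I(\theta_* )=(\theta_*-\varepsilon,\theta_*+\varepsilon)$: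 (i) $S_\theta$ is invertible; (ii) $S_\theta^{-1}y=S_{\theta_*}^{-1}y$ for all $y\in B_0\cap B_1$; (iii) $\sup_{\theta\in I(\theta_* )}\|S_\theta^{-1}\|\le C(\theta_* )\|S_{\theta_*}^{-1}\|$. For a stable family the set of $\theta\in(0,1)$ for which $T_\theta$ is invertible is open; its connected components (maximal open intervals) are called intervals of invertibility of $T$. *)

(* Scalars: K : numFieldType (covers real and complex
   Banach spaces); interpolation parameters theta : R, R : realType. *)
From HB Require Import structures.
From mathcomp Require Import all_boot all_order all_algebra.
From mathcomp Require Import reals.

Set Implicit Arguments.
Unset Strict Implicit.
Unset Printing Implicit Defensive.

Import Order.TTheory GRing.Theory Num.Theory.
Local Open Scope ring_scope.

Section Interpolation.
Variable K : numFieldType.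

(* A normed subspace of an ambient K-vector space V: membership predicate
   together with a norm (only meaningful on members). *)
Record nspace (V : lmodType K) := NSpace {
  ns_mem : V -> Prop;
  ns_norm : V -> K }.

Definition is_banach (V : lmodType K) (X : nspace V) : Prop :=
  [/\ ns_mem X 0,
      (forall (a : K) x y, ns_mem X x -> ns_mem X y -> ns_mem X (a *: x + y)),
      (forall x, ns_mem X x -> 0 <= ns_norm X x),
      (forall x, ns_mem X x -> ns_norm X x = 0 -> x = 0)
    & [/\
      (forall (a : K) x, ns_mem X x -> ns_norm X (a *: x) = `|a| * ns_norm X x),
      (forall x y, ns_mem X x -> ns_mem X y ->
         ns_norm X (x + y) <= ns_norm X x + ns_norm X y)
    & (forall u : nat -> V, (forall n, ns_mem X (u n)) ->
         (forall e : K, 0 < e -> exists M, forall m n, (M <= m)%N -> (M <= n)%N ->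
              ns_norm X (u m - u n) < e) ->
         exists x, ns_mem X x /\
           forall e : K, 0 < e -> exists M, forall n, (M <= n)%N ->
              ns_norm X (u n - x) < e)]].

(* A Banach couple (A0, A1): two Banach spaces inside an ambient vector space
   V which is exactly A0 + A1, and such that A0 + A1 is Hausdorff (the
   K-functional norm || x ||_{A0+A1} = inf {||x0||_0 + ||x1||_1 : x = x0 + x1}
   vanishes only at 0). *)
Record couple := Couple {
  cV : lmodType K;
  c0 : nspace cV;
  c1 : nspace cV;
  c0_banach : is_banach c0;
  c1_banach : is_banach c1;
  c_sum : forall x : cV, exists x0 x1,
      [/\ ns_mem c0 x0, ns_mem c1 x1 & x = x0 + x1];
  c_hausdorff : forall x : cV,
      (forall e : K, 0 < e -> exists x0 x1,
         [/\ ns_mem c0 x0, ns_mem c1 x1, x = x0 + x1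
           & ns_norm c0 x0 + ns_norm c1 x1 < e]) -> x = 0 }.

Definition is_linear (V W : lmodType K) (f : V -> W) : Prop :=
  forall (a : K) x y, f (a *: x + y) = a *: f x + f y.

Definition bounded_into (V W : lmodType K) (X : nspace V) (Y : nspace W)
  (f : V -> W) : Prop :=
  exists C : K, forall x, ns_mem X x ->
    ns_mem Y (f x) /\ ns_norm Y (f x) <= C * ns_norm X x.

Definition operator (A B : couple) (T : cV A -> cV B) : Prop :=
  [/\ is_linear T, bounded_into (c0 A) (c0 B) T & bounded_into (c1 A) (c1 B) T].

Record interp_functor := InterpFunctor {
  ifun : forall A : couple, nspace (cV A);
  ifun_banach : forall A, is_banach (ifun A);
  ifun_cap : forall A, exists C : K, forall x,
      ns_mem (c0 A) x -> ns_mem (c1 A) x ->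
      ns_mem (ifun A) x /\
      ns_norm (ifun A) x <= C * Num.max (ns_norm (c0 A) x) (ns_norm (c1 A) x);
  ifun_sum : forall A, exists C : K, forall x, ns_mem (ifun A) x ->
      exists x0 x1, [/\ ns_mem (c0 A) x0, ns_mem (c1 A) x1, x = x0 + x1
                      & ns_norm (c0 A) x0 + ns_norm (c1 A) x1
                          <= C * ns_norm (ifun A) x];
  ifun_interp : forall (A B : couple) (T : cV A -> cV B),
      operator T -> bounded_into (ifun A) (ifun B) T }.

Definition invertible_between (V W : lmodType K) (X : nspace V) (Y : nspace W)
  (T : V -> W) : Prop :=
  [/\ forall x, ns_mem X x -> ns_mem Y (T x),
      forall y, ns_mem Y y -> exists x, ns_mem X x /\ T x = y,
      forall x1 x2, ns_mem X x1 -> ns_mem X x2 -> T x1 = T x2 -> x1 = x2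
    & exists M : K, forall x, ns_mem X x -> ns_norm X x <= M * ns_norm Y (T x)].

Variable R : realType.

Definition in01 (t : R) : Prop := 0 < t < 1.

Definition invertible_at (F : R -> interp_functor) (A B : couple)
  (T : cV A -> cV B) (t : R) : Prop :=
  in01 t /\ invertible_between (ifun (F t) A) (ifun (F t) B) T.

Definition stable_family (F : R -> interp_functor) : Prop :=
  exists C : R -> K, forall (A B : couple) (S : cV A -> cV B) (ts : R),
    operator S -> invertible_at F S ts ->
    exists eps : R, 0 < eps /\
      forall t, ts - eps < t < ts + eps ->
      [/\ invertible_at F S t,
          (forall y x x', ns_mem (c0 B) y -> ns_mem (c1 B) y ->
             ns_mem (ifun (F t) A) x -> ns_mem (ifun (F ts) A) x' ->
             S x = y -> S x' = y -> x = x')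
        &
          (forall M : K,
             (forall x, ns_mem (ifun (F ts) A) x ->
                ns_norm (ifun (F ts) A) x <= M * ns_norm (ifun (F ts) B) (S x)) ->
             forall x, ns_mem (ifun (F t) A) x ->
                ns_norm (ifun (F t) A) x
                  <= C ts * M * ns_norm (ifun (F t) B) (S x))].

Definition interval_of_invertibility (F : R -> interp_functor) (A B : couple)
  (T : cV A -> cV B) (a b : R) : Prop :=
  [/\ a < b,
      (forall t, a < t < b -> invertible_at F T t)
    & (forall a' b', a' <= a -> b <= b' ->
         (forall t, a' < t < b' -> invertible_at F T t) -> a' = a /\ b' = b)].

End Interpolation.

From HB Require Import structures.
From mathcomp Require Import all_boot all_order all_algebra.
From mathcomp Require Import reals classical_sets.
Import Order.TTheory GRing.Theory Num.Theory.
Local Open Scope ring_scope.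
Local Open Scope classical_set_scope.
Set Implicit Arguments.
Unset Strict Implicit.

(* 1. Connectedness.  For z in Y0 cap Y1 the preimage g(t) := T_t^{-1} z is
      defined for every t in the interval, and stability (ii) says g is
      locally constant there; a locally constant function on a real segment
      is constant (a supremum argument).  So z has one common preimage.
   2. Quantitative inverse.  Composing the bound on ||T_t^{-1}|| with the
      embedding F_t(X) -> X0 + X1 bounds the X0 + X1 norm of x by L_t times
      the F_t(Y) norm of T x.
   3. Density.  Approximate y by z in Y0 cap Y1 in both F_t0(Y) and F_t1(Y)
      and let w be the common preimage of z; then x0 - x1 = (x0 - w) - (x1 - w)
      has arbitrarily small X0 + X1 norm, hence vanishes since X0 + X1 is
      Hausdorff. *)

Section BanachFacts.
Variable K : numFieldType.

Lemma banach_memB (V : lmodType K) (X : nspace V) x y :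
  is_banach X -> ns_mem X x -> ns_mem X y -> ns_mem X (x - y).
Proof.
move=> [_ lin _ _ _] hx hy.
by have := lin (-1) y x hy hx; rewrite scaleN1r addrC.
Qed.

Lemma banach_normB (V : lmodType K) (X : nspace V) x y :
  is_banach X -> ns_mem X x -> ns_mem X y ->
  ns_norm X (x - y) <= ns_norm X x + ns_norm X y.
Proof.
move=> XB hx hy; have [_ _ _ _ [homog triangle _]] := XB.
have hNy : ns_mem X (- y) by rewrite -[- y]add0r; apply: banach_memB => //; case: XB.
have normN : ns_norm X (- y) = ns_norm X y.
  by rewrite -scaleN1r homog // normrN normr1 mul1r.
by rewrite -normN; apply: triangle.
Qed.

Lemma linearB_of (V W : lmodType K) (f : V -> W) x y :
  is_linear f -> f (x - y) = f x - f y.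
Proof. by move=> lin; rewrite addrC -scaleN1r lin scaleN1r addrC. Qed.

End BanachFacts.

(* A function on [t0, t1] which is locally constant (relative to [t0, t1])
   is constant: the supremum of the points up to which g equals g t0 is t1. *)
Lemma locally_constant_on_interval (R : realType) (V : Type) (g : R -> V)
    (t0 t1 : R) :
  t0 <= t1 ->
  (forall s, t0 <= s <= t1 -> exists2 eps, 0 < eps &
     forall r, t0 <= r <= t1 -> s - eps < r < s + eps -> g r = g s) ->
  g t1 = g t0.
Proof.
move=> t01 loc.
pose E := [set s : R | t0 <= s <= t1 /\ forall r, t0 <= r <= s -> g r = g t0].
have Et0 : E t0.
  split=> [|r /andP[r0 r1]]; first by rewrite lexx t01.
  by have -> : r = t0 by apply/eqP; rewrite eq_le r1 r0.
have supE : has_sup E by split; [exists t0 | exists t1 => s [/andP[_ ->]]].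
set s := sup E.
have t0s : t0 <= s by exact: sup_upper_bound.
have st1 : s <= t1 by apply: ge_sup; [exists t0 | move=> x [/andP[_ ->]]].
have [eps eps0 loc_s] : exists2 eps, 0 < eps &
    forall r, t0 <= r <= t1 -> s - eps < r < s + eps -> g r = g s.
  by apply: loc; rewrite t0s st1.
have [s' Es' lts'] : exists2 s', E s' & s - eps < s' by exact: sup_adherent.
have s's : s' <= s by exact: sup_upper_bound.
case: Es' => /andP[t0s' s't1] Es'.
(* some s' in E is eps-close to s, so g s = g s' = g t0 *)
have gs : g s = g t0.
  rewrite -(Es' s'); last by rewrite t0s' lexx.
  apply/esym/loc_s; first by rewrite t0s' s't1.
  by rewrite lts' (le_lt_trans s's) // ltrDl.
have before_s_eps r : t0 <= r <= t1 -> r < s + eps -> g r = g t0.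
  move=> /andP[t0r rt1] rlt; case: (leP r s') => [rs'|s'r].
    by apply: Es'; rewrite t0r rs'.
  by rewrite -gs; apply: loc_s; rewrite ?t0r ?rt1 ?rlt ?(lt_trans lts' s'r).
case: (ltP t1 (s + eps)) => [t1lt|le_t1].
  by apply: before_s_eps => //; rewrite t01 lexx.
(* otherwise s + eps/2 lies in E, contradicting s = sup E *)
have lt_mid : s < s + eps / 2 by rewrite ltrDl divr_gt0.
have mid_lt : s + eps / 2 < s + eps by rewrite ltrD2l gtr_pMr ?invf_lt1 ?ltr1n.
have : E (s + eps / 2).
  split=> [|r /andP[t0r rmid]].
    by rewrite (le_trans t0s (ltW lt_mid)) (le_trans (ltW mid_lt)).
  apply: before_s_eps; last exact: le_lt_trans rmid mid_lt.
  by rewrite t0r (le_trans rmid (le_trans (ltW mid_lt) le_t1)).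
by move=> /(sup_upper_bound supE); rewrite leNgt lt_mid.
Qed.

(* The norm of the sum space A0 + A1 (the K-functional at 1), expressed as
   the relation "x has a decomposition of cost at most r". *)
Section SumNorm.
Variable K : numFieldType.
Variable A : couple K.

Definition sum_norm_le (x : cV A) (r : K) : Prop :=
  exists x0 x1, [/\ ns_mem (c0 A) x0, ns_mem (c1 A) x1, x = x0 + x1
                  & ns_norm (c0 A) x0 + ns_norm (c1 A) x1 <= r].

Lemma sum_norm_le_trans x r s : sum_norm_le x r -> r <= s -> sum_norm_le x s.
Proof.
move=> [x0 [x1 [h0 h1 -> le_r]]] rs.
by exists x0, x1; split=> //; apply: le_trans rs.
Qed.

Lemma sum_norm_leB x y r s :
  sum_norm_le x r -> sum_norm_le y s -> sum_norm_le (x - y) (r + s).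
Proof.
move=> [x0 [x1 [hx0 hx1 -> nx]]] [y0 [y1 [hy0 hy1 -> ny]]].
have [A0 A1] := (c0_banach A, c1_banach A).
exists (x0 - y0), (x1 - y1); split; try exact: banach_memB.
  by rewrite opprD addrACA.
apply: le_trans (lerD nx ny); rewrite addrACA.
by apply: lerD; exact: banach_normB.
Qed.

Lemma sum_norm_le_eq0 x : (forall e : K, 0 < e -> sum_norm_le x e) -> x = 0.
Proof.
move=> small; apply: c_hausdorff => e e0.
have [x0 [x1 [h0 h1 ex le_x]]] := small (e / 2) (divr_gt0 e0 (ltr0Sn _ 1)).
exists x0, x1; split=> //; apply: le_lt_trans le_x _.
by rewrite gtr_pMr ?invf_lt1 ?ltr1n.
Qed.

End SumNorm.

Section Invertibility.
Variables (K : numFieldType) (R : realType) (F : R -> interp_functor K).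
Variables (X Y : couple K) (T : cV X -> cV Y).

(* Y0 cap Y1 embeds into F_t(Y), so its elements have preimages under T_t. *)
Lemma cap_preimage t z :
  invertible_at F T t -> ns_mem (c0 Y) z -> ns_mem (c1 Y) z ->
  exists w, ns_mem (ifun (F t) X) w /\ T w = z.
Proof.
move=> [_ [_ onto _ _]] z0 z1; apply: onto.
by have [C capF] := ifun_cap (F t) Y; case: (capF z z0 z1).
Qed.

(* Step 2: ||x||_{X0+X1} <= L ||T x||_{F_t(Y)} on F_t(X), combining the
   norm of T_t^{-1} with the embedding F_t(X) -> X0 + X1. *)
Lemma inverse_bound_in_sum t : invertible_at F T t ->
  exists2 L : K, 0 <= L & forall x, ns_mem (ifun (F t) X) x ->
    sum_norm_le x (L * ns_norm (ifun (F t) Y) (T x)).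
Proof.
move=> [_ [into _ _ [M invM]]]; have [C sumF] := ifun_sum (F t) X.
have [_ _ nX_ge0 _ _] := ifun_banach (F t) X.
have [_ _ nY_ge0 _ _] := ifun_banach (F t) Y.
have [_ _ n0_ge0 _ _] := c0_banach X; have [_ _ n1_ge0 _ _] := c1_banach X.
exists (`|C| * `|M|) => [|x hx]; first by rewrite mulr_ge0.
have [x0 [x1 [h0 h1 ex le_C]]] := sumF x hx.
exists x0, x1; split=> //; apply: (le_trans le_C).
(* both bounds are nonnegative, so they equal their norms *)
have Cx_ge0 : 0 <= C * ns_norm (ifun (F t) X) x.
  by apply: le_trans le_C; rewrite addr_ge0 ?n0_ge0 ?n1_ge0.
have MTx_ge0 := le_trans (nX_ge0 _ hx) (invM x hx).
rewrite -(ger0_norm Cx_ge0) normrM (ger0_norm (nX_ge0 _ hx)) -mulrA.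
apply: ler_wpM2l => //; apply: (le_trans (invM x hx)).
by rewrite -(ger0_norm MTx_ge0) normrM (ger0_norm (nY_ge0 _ (into _ hx))).
Qed.

(* Step 1: elements of Y0 cap Y1 have the same preimage under every T_t,
   t in an interval of invertibility, by stability (ii) and connectedness. *)
Lemma cap_preimages_agree (a b t0 t1 : R) z w0 w1 :
  stable_family F -> operator T ->
  (forall t, a < t < b -> invertible_at F T t) ->
  a < t0 < b -> a < t1 < b -> ns_mem (c0 Y) z -> ns_mem (c1 Y) z ->
  ns_mem (ifun (F t0) X) w0 -> ns_mem (ifun (F t1) X) w1 ->
  T w0 = z -> T w1 = z -> w0 = w1.
Proof.
move=> [C stable] opT inv.
wlog le01 : t0 t1 w0 w1 / t0 <= t1 => [sym|].
  case: (leP t0 t1) => [le01|/ltW le10] ht0 ht1 z0 z1 hw0 hw1 Tw0 Tw1.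
    exact: (sym t0 t1).
  by apply/esym; apply: (sym t1 t0).
move=> /andP[at0 t0b] /andP[at1 t1b] z0 z1 hw0 hw1 Tw0 Tw1.
have in_ab r : t0 <= r <= t1 -> a < r < b.
  by move=> /andP[t0r rt1]; rewrite (lt_le_trans at0 t0r) (le_lt_trans rt1 t1b).
pose preim r : set (cV X) := [set w | ns_mem (ifun (F r) X) w /\ T w = z].
pose g r := xget 0 (preim r).
have gP r : a < r < b -> preim r (g r).
  by move=> hr; apply: xgetPex; exact: cap_preimage (inv r hr) z0 z1.
have g_unique r w : a < r < b -> ns_mem (ifun (F r) X) w -> T w = z -> w = g r.
  move=> hr hw Tw; have [_ [_ _ inj _]] := inv r hr; have [hg Tg] := gP r hr.
  by apply: inj => //; rewrite Tw Tg.
have -> : w0 = g t0 by apply: g_unique => //; rewrite at0 t0b.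
have -> : w1 = g t1 by apply: g_unique => //; rewrite at1 t1b.
apply/esym/(locally_constant_on_interval le01) => s hs.
have [eps [eps0 near_s]] := stable X Y T s opT (inv s (in_ab s hs)).
exists eps => // r hr ball_r; have [_ agree _] := near_s r ball_r.
have [[gr Tgr] [gs Tgs]] := (gP r (in_ab r hr), gP s (in_ab s hs)).
exact: agree z0 z1 gr gs Tgr Tgs.
Qed.

End Invertibility.

Lemma inverses_arbitrarily_close (K : numFieldType) (R : realType)
    (F : R -> interp_functor K) (X Y : couple K) (T : cV X -> cV Y)
    (a b t0 t1 : R) y x0 x1 :
  stable_family F -> operator T ->
  (forall t, a < t < b -> invertible_at F T t) ->
  a < t0 < b -> a < t1 < b ->
  (forall d : K, 0 < d -> exists z,
     [/\ ns_mem (c0 Y) z, ns_mem (c1 Y) z,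
         ns_norm (ifun (F t0) Y) (y - z) < d
       & ns_norm (ifun (F t1) Y) (y - z) < d]) ->
  ns_mem (ifun (F t0) X) x0 -> ns_mem (ifun (F t1) X) x1 ->
  T x0 = y -> T x1 = y ->
  forall e : K, 0 < e -> sum_norm_le (x0 - x1) e.
Proof.
move=> stable opT inv ht0 ht1 dense hx0 hx1 Tx0 Tx1 e e0.
have [linT _ _] := opT.
have [L0 L0_ge0 bound0] := inverse_bound_in_sum (inv t0 ht0).
have [L1 L1_ge0 bound1] := inverse_bound_in_sum (inv t1 ht1).
pose d := e / (L0 + L1 + 1).
have L_gt0 : 0 < L0 + L1 + 1 by rewrite ltr_wpDl ?addr_ge0.
have [z [z0 z1 near0 near1]] := dense d (divr_gt0 e0 L_gt0).
have [w [hw Tw]] := cap_preimage (inv t0 ht0) z0 z1.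
have [w' [hw' Tw']] := cap_preimage (inv t1 ht1) z0 z1.
have ww' : w = w' by exact: cap_preimages_agree stable opT inv ht0 ht1 z0 z1 hw hw' Tw Tw'.
subst w'.
have -> : x0 - x1 = (x0 - w) - (x1 - w) by rewrite opprB addrA subrK.
have := sum_norm_leB (bound0 _ (banach_memB (ifun_banach _ _) hx0 hw))
                     (bound1 _ (banach_memB (ifun_banach _ _) hx1 hw')).
rewrite (linearB_of x0 w linT) (linearB_of x1 w linT) Tx0 Tx1 Tw.
move=> /sum_norm_le_trans; apply.
apply: (le_trans (y := (L0 + L1) * d)).
  by rewrite mulrDl; apply: lerD; apply: ler_wpM2l => //; exact: ltW.
rewrite /d mulrA ler_pdivrMr // [X in X <= _]mulrC.
by apply: ler_wpM2l; [exact: ltW | rewrite lerDl ler01].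
Qed.

Theorem theorem4p3 (K : numFieldType) (R : realType)
  (F : R -> interp_functor K) (X Y : couple K) (T : cV X -> cV Y) (a b : R) :
  stable_family F ->
  operator T ->
  interval_of_invertibility F T a b ->
  (* Y0 cap Y1 is dense in F_alpha(Y) cap F_beta(Y) (max norm) *)
  (forall al be : R, in01 al -> in01 be ->
     forall y, ns_mem (ifun (F al) Y) y -> ns_mem (ifun (F be) Y) y ->
     forall e : K, 0 < e -> exists z,
       [/\ ns_mem (c0 Y) z, ns_mem (c1 Y) z,
           ns_norm (ifun (F al) Y) (y - z) < e
         & ns_norm (ifun (F be) Y) (y - z) < e]) ->
  forall t0 t1 : R, a < t0 < b -> a < t1 < b ->
  (* T_{t0}^{-1} y = T_{t1}^{-1} y for y in F_{t0}(Y) cap F_{t1}(Y) *)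
  forall y x0 x1,
    ns_mem (ifun (F t0) Y) y -> ns_mem (ifun (F t1) Y) y ->
    ns_mem (ifun (F t0) X) x0 -> ns_mem (ifun (F t1) X) x1 ->
    T x0 = y -> T x1 = y -> x0 = x1.
Proof.
move=> stable opT [_ inv _] dense t0 t1 ht0 ht1 y x0 x1 y0 y1 hx0 hx1 Tx0 Tx1.
have [[in0 _] [in1 _]] := (inv t0 ht0, inv t1 ht1).
apply/eqP; rewrite -subr_eq0; apply/eqP; apply: sum_norm_le_eq0.
apply: (inverses_arbitrarily_close stable opT inv ht0 ht1 _ hx0 hx1 Tx0 Tx1).
exact: dense in0 in1 y y0 y1.
Qed.
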